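(* Let $\mathbf{v}$ be a random variable giving weak ignorability, i.e. for both $t\in\{0,1\}$, $\mathbf{y}(t)\perp\mathrm{t}\mid\mathbf{v}$ and $p(\mathrm{t}\mid\mathbf{v})>0$. If $\mathbb{P}_{\mathrm{t}}(\mathbf{v})$ is a Pt-score, then $\mathbf{y}(t)\perp\mathbf{v},\mathrm{t}\mid\mathbb{P}_t$ for both $t\in\{0,1\}$.
   Context: Potential outcomes framework: binary treatment $\mathrm{t}\in\{0,1\}$ and potential outcomes $\mathbf{y}(0),\mathbf{y}(1)$. A P0-score (resp. P1-score) of $\mathbf{v}$ is a function $\mathbb{P}(\mathbf{v})$ such that $\mathbf{y}(0)\perp\mathbf{v}\mid\mathbb{P}(\mathbf{v})$ (resp. $\mathbf{y}(1)\perp\mathbf{v}\mid\mathbb{P}(\mathbf{v})$). Given a P0-score $\mathbb{P}_0$ and a P1-score $\mathbb{P}_1$, the Pt-score is $\mathbb{P}_{\mathrm{t}}$, i.e. $\mathbb{P}_t$ when $\mathrm{t}=t$. *)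

From HB Require Import structures.
From mathcomp Require Import all_boot all_order all_algebra.
From mathcomp Require Import all_classical all_reals all_analysis.

Set Implicit Arguments.
Unset Strict Implicit.
Unset Printing Implicit Defensive.

Import Order.TTheory GRing.Theory Num.Theory.
Local Open Scope classical_set_scope.
Local Open Scope ring_scope.

(* Conditional independence  x _||_ y | z  on a probability space (T, P):
   for every measurable event {x \in A}, the conditional probability
   P(x \in A | y, z) admits a version that is a measurable function of z
   alone, i.e. there is a measurable g : Z -> [0,1] with
     P(x \in A, y \in B, z \in C) = E[ g(z) ; y \in B, z \in C ]
   for all measurable B, C (rectangles generate sigma(y,z)). *)
Definition cond_indep {d dx dy dz : measure_display} {T : measurableType d}
  {R : realType} (P : probability T R)
  {X : measurableType dx} {Y : measurableType dy} {Z : measurableType dz}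
  (x : T -> X) (y : T -> Y) (z : T -> Z) : Prop :=
  forall A : set X, measurable A ->
    exists g : Z -> R,
      [/\ measurable_fun setT g,
          (forall c, 0 <= g c <= 1) &
          forall (B : set Y) (C : set Z), measurable B -> measurable C ->
            P (x @^-1` A `&` y @^-1` B `&` z @^-1` C) =
            (\int[P]_(w in y @^-1` B `&` z @^-1` C) (g (z w))%:E)%E].

(* Positivity  p(t = b | v) > 0  (almost surely): some version h(v) of the
   conditional probability P(t = b | v) is a.s. strictly positive. *)
Definition positivity {d dv : measure_display} {T : measurableType d}
  {R : realType} (P : probability T R) {V : measurableType dv}
  (tr : T -> bool) (v : T -> V) (b : bool) : Prop :=
  exists h : V -> R,
    [/\ measurable_fun setT h,
        (forall c, 0 <= h c <= 1),
        (forall C : set V, measurable C ->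
           P (tr @^-1` [set b] `&` v @^-1` C) =
           (\int[P]_(w in v @^-1` C) (h (v w))%:E)%E) &
        {ae P, forall w, 0 < h (v w)}].

(* f is a score of v for the outcome y: y _||_ v | f(v).  With y = y(0)
   (resp. y(1)) this is a P0-score (resp. P1-score). *)
Definition is_score {d dy dv ds : measure_display} {T : measurableType d}
  {R : realType} (P : probability T R)
  {Y : measurableType dy} {V : measurableType dv} {S : measurableType ds}
  (y : T -> Y) (v : T -> V) (f : V -> S) : Prop :=
  measurable_fun setT f /\ cond_indep P y v (f \o v).

From HB Require Import structures.
From mathcomp Require Import all_boot all_order all_algebra.
From mathcomp Require Import all_classical all_reals all_analysis.

(* This is the contraction property of conditional independence.  Fix an
   event {y(t) \in A}.  Ignorability gives a version g(v) of
   P(y(t) \in A | v, t), and the score property a version g'(P_t(v)) of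
   P(y(t) \in A | v).  Integrating out t, g(v) is also a version of
   P(y(t) \in A | v), so g(v) = g'(P_t(v)) almost surely; hence g'(P_t(v)) is
   a version of P(y(t) \in A | v, t), which is the claim. *)

Import Order.TTheory GRing.Theory Num.Theory.
Local Open Scope classical_set_scope.
Local Open Scope ring_scope.

Lemma measurable_fun_preimage {d1 d2 : measure_display}
  {T1 : measurableType d1} {T2 : measurableType d2} (h : T1 -> T2) (B : set T2) :
  measurable_fun setT h -> measurable B -> measurable (h @^-1` B).
Proof. by move=> mh mB; rewrite -[X in measurable X]setTI; exact: mh. Qed.

Lemma integrable_bounded01 {d : measure_display} {T : measurableType d}
  {R : realType} (mu : {finite_measure set T -> \bar R}) (D : set T) (h : T -> R) :
  measurable D -> measurable_fun setT h -> (forall c, 0 <= h c <= 1) ->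
  mu.-integrable D (EFin \o h).
Proof.
move=> mD mh h01.
apply: (le_integrable mD _ _ (finite_measure_integrable_cst _ 1 mD)).
  by apply/measurable_realfun.measurable_EFinP; exact: measurable_funTS.
move=> c _ /=; have /andP[h0 h1] := h01 c.
by rewrite lee_fin normr1 ger0_norm.
Qed.

Section distribution_ae_eq.
Context {d dv : measure_display} {T : measurableType d} {V : measurableType dv}
  {R : realType} (P : probability T R) (v : T -> V).
Hypothesis mv : measurable_fun setT v.

Let vm : {mfun T >-> V} := HB.pack v (isMeasurableFun.Build _ _ _ _ v mv).

Lemma ae_eq_distribution_comp (f g : V -> \bar R) :
  ae_eq (distribution P vm) setT f g -> ae_eq P setT (f \o v) (g \o v).
Proof.
case=> N [mN N0 fgN]; exists (v @^-1` N); split => //.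
  exact: measurable_fun_preimage.
by move=> w /= Nw; apply: fgN => /= fg; apply: Nw => _; exact: fg.
Qed.

Lemma ae_eq_of_preimage_integrals (g g' : V -> R) :
  measurable_fun setT g -> measurable_fun setT g' ->
  (forall c, 0 <= g c <= 1) -> (forall c, 0 <= g' c <= 1) ->
  (forall E, measurable E ->
    (\int[P]_(w in v @^-1` E) (g (v w))%:E =
     \int[P]_(w in v @^-1` E) (g' (v w))%:E)%E) ->
  ae_eq P setT (EFin \o g \o v) (EFin \o g' \o v).
Proof.
move=> mg mg' g01 g'01 gg'; apply: ae_eq_distribution_comp.
have integral_distribution (h : V -> R) :
    measurable_fun setT h -> (forall c, 0 <= h c <= 1) -> forall E, measurable E ->
    (\int[distribution P vm]_(c in E) (h c)%:E =
     \int[P]_(w in v @^-1` E) (h (v w))%:E)%E.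
  move=> mh h01 E mE; apply: ge0_integral_pushforward => //.
    by apply/measurable_realfun.measurable_EFinP; exact: measurable_funTS.
  by move=> c _; rewrite lee_fin; case/andP: (h01 c).
apply: integral_ae_eq => //; first exact: integrable_bounded01.
  by apply/measurable_realfun.measurable_EFinP.
by move=> E _ mE; rewrite !integral_distribution // gg'.
Qed.

End distribution_ae_eq.

Lemma measureI_integral_setU {d : measure_display} {T : measurableType d}
  {R : realType} (mu : {measure set T -> \bar R}) (A E1 E2 : set T) (h : T -> R) :
  measurable A -> measurable E1 -> measurable E2 -> E1 `&` E2 = set0 ->
  measurable_fun setT h -> (forall c, 0 <= h c) ->
  mu (A `&` E1) = (\int[mu]_(w in E1) (h w)%:E)%E ->
  mu (A `&` E2) = (\int[mu]_(w in E2) (h w)%:E)%E ->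
  mu (A `&` (E1 `|` E2)) = (\int[mu]_(w in E1 `|` E2) (h w)%:E)%E.
Proof.
move=> mA mE1 mE2 E12 mh h0 hE1 hE2.
rewrite setIUr measureU; first last.
- by rewrite setIACA E12 setI0.
- exact: measurableI.
- exact: measurableI.
rewrite ge0_integral_setU ?disj_set2E ?E12 //; first by congr (_ + _).
- by apply/measurable_realfun.measurable_EFinP; exact: measurable_funTS.
- by move=> w _; rewrite lee_fin.
Qed.

Lemma preimage_pair_bool {T V : Type} (v : T -> V) (t : T -> bool) (B : set (V * bool)) :
  (fun w => (v w, t w)) @^-1` B =
  (t @^-1` [set false] `&` v @^-1` ysection B false) `|`
  (t @^-1` [set true] `&` v @^-1` ysection B true).
Proof.
apply/seteqP; split => w /=; rewrite /ysection /=.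
  by case: (t w) => Bw; [right|left]; split => //; rewrite inE.
by case=> -[/= -> /set_mem].
Qed.

Lemma cond_indep_contraction {d dx dv ds : measure_display}
  {T : measurableType d} {R : realType} (P : probability T R)
  {X : measurableType dx} {V : measurableType dv} {S : measurableType ds}
  (x : T -> X) (t : T -> bool) (v : T -> V) (f : V -> S) :
  measurable_fun setT x -> measurable_fun setT t -> measurable_fun setT v ->
  cond_indep P x t v -> is_score P x v f ->
  cond_indep P x (fun w => (v w, t w)) (f \o v).
Proof.
move=> mx mt mv ign [mf score] A mA.
have [g [mg g01 gP]] := ign A mA.
have [g' [mg' g'01 g'P]] := score A mA.
have mg'f : measurable_fun setT (g' \o f) by exact: measurableT_comp.
exists g'; split => // B C mB mC.
have g_g'f : ae_eq P setT (EFin \o g \o v) (EFin \o (g' \o f) \o v).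
  apply: ae_eq_of_preimage_integrals => // [c|E mE]; first exact: g'01.
  have := gP setT E measurableT mE; have := g'P E setT mE measurableT.
  by rewrite !preimage_setT !setIT setTI => g'E gE; rewrite -gE.
have g'_version b (D : set V) : measurable D ->
    P (x @^-1` A `&` (t @^-1` [set b] `&` v @^-1` D)) =
    (\int[P]_(w in t @^-1` [set b] `&` v @^-1` D) (g' (f (v w)))%:E)%E.
  move=> mD; have mtD : measurable (t @^-1` [set b] `&` v @^-1` D).
    by apply: measurableI; exact: measurable_fun_preimage.
  rewrite setIA gP //.
  apply: ae_eq_integral => //; last exact: ae_eq_subset g_g'f.
  - by apply/measurable_realfun.measurable_EFinP; apply: measurable_funTS;
      exact: (measurableT_comp mg mv).
  - by apply/measurable_realfun.measurable_EFinP; apply: measurable_funTS;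
      exact: (measurableT_comp mg'f mv).
pose D b := ysection B b `&` f @^-1` C.
pose E b := t @^-1` [set b] `&` v @^-1` D b.
have mD b : measurable (D b).
  by apply: measurableI; [exact: measurable_ysection | exact: measurable_fun_preimage].
have mE b : measurable (E b).
  by apply: measurableI; exact: measurable_fun_preimage.
have E_disj : E false `&` E true = set0.
  by apply/seteqP; split => w // [[/= tw _] [/= tw1 _]]; rewrite tw in tw1.
rewrite -setIA.
have -> : (fun w => (v w, t w)) @^-1` B `&` (f \o v) @^-1` C = E false `|` E true.
  by rewrite preimage_pair_bool setIUl -!setIA.
apply: measureI_integral_setU => //.
- exact: measurable_fun_preimage.
- exact: (measurableT_comp mg'f mv).
- by move=> w; case/andP: (g'01 (f (v w))).
- exact: (g'_version false (D false) (mD false)).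
- exact: (g'_version true (D true) (mD true)).
Qed.

Theorem proposition1
  (d dy dv ds0 ds1 : measure_display) (T : measurableType d) (R : realType)
  (P : probability T R)
  (Y : measurableType dy) (V : measurableType dv)
  (S0 : measurableType ds0) (S1 : measurableType ds1)
  (tr : T -> bool) (y0 y1 : T -> Y) (v : T -> V)
  (P0 : V -> S0) (P1 : V -> S1)
  (mtr : measurable_fun setT tr) (my0 : measurable_fun setT y0)
  (my1 : measurable_fun setT y1) (mv : measurable_fun setT v)
  (ign0 : cond_indep P y0 tr v) (ign1 : cond_indep P y1 tr v)
  (pos0 : positivity P tr v false) (pos1 : positivity P tr v true)
  (sc0 : is_score P y0 v P0) (sc1 : is_score P y1 v P1) :
  cond_indep P y0 (fun w => (v w, tr w)) (P0 \o v) /\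
  cond_indep P y1 (fun w => (v w, tr w)) (P1 \o v).
Proof.
split; exact: cond_indep_contraction.
Qed.
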